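(* Let $n\ge1$ and $T_n=T(x_1\dots x_n,k)$ with $x_1,\dots,x_n$ i.i.d. uniform on $\{B,b,R,r\}$ and $k$ uniform on $\{1,\dots,n\}$ (independent). Then for each $j\in\{1,\dots,n\}$, each vertex $v$ of the $j$-th face of $T_n$ (the triangle created at step $j$), and each $m\ge1$, $$\mathbb P[\deg(v)\ge m]\le 2\left(\tfrac34\right)^{m/4}.$$
   Context: Necklace construction (Sheffield). Given a finite word $X=x_1\dots x_n$ in $\{B,b,R,r\}$, build inductively disc triangulations $D_0\subset\dots\subset D_n$ in the closed upper half-plane with blue/red vertices and an active edge with blue endpoint $b_j$ and red endpoint $r_j$; initially non-positive integers are blue, positive integers red, $b_0=0,r_0=1$. Step according to $x_{j+1}$: (B) new blue vertex $b_{j+1}$, triangle $(b_j,r_j,b_{j+1})$, $r_{j+1}=r_j$; (R) new red vertex $r_{j+1}$, triangle $(b_j,r_j,r_{j+1})$, $b_{j+1}=b_j$; (b) $b_{j+1}$ = counterclockwise boundary neighbour of $b_j$ (or $m-1$, adding edge $[m-1,m]$, if $b_j=m\in\mathbb Z$), triangle $(b_{j+1},b_j,r_j)$, $r_{j+1}=r_j$; (r) $r_{j+1}$ = clockwise boundary neighbour of $r_j$ (or $m+1$, adding $[m,m+1]$, if $r_j=m\in\mathbb Z$), triangle $(b_j,r_j,r_{j+1})$, $b_{j+1}=b_j$. $T_+(X)$ is $D_n$ rooted at the first triangle constructed; $T(X,k)$ is $T_+(X)$ rerooted at the triangle created at step $k$. $\deg(v)$ is the degree of $v$ in the graph of $T_n$.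 *)

From Stdlib Require Import Reals.
From HB Require Import structures.
From mathcomp Require Import all_boot all_order all_algebra.

Set Implicit Arguments.
Unset Strict Implicit.
Unset Printing Implicit Defensive.

Inductive letter := LB | Lb | LR | Lr.

Definition letter_code (x : letter) : bool * bool :=
  match x with LB => (true, true) | Lb => (true, false)
             | LR => (false, true) | Lr => (false, false) end.
Definition letter_decode (c : bool * bool) : letter :=
  match c with (true, true) => LB | (true, false) => Lb
             | (false, true) => LR | (false, false) => Lr end.
Lemma letter_codeK : cancel letter_code letter_decode.
Proof. by case. Qed.
HB.instance Definition _ := Finite.copy letter (can_type letter_codeK).

(* Vertices: the integers (initial vertices on the real line; non-positive
   ones blue, positive ones red) and the vertex VNew j created at step j. *)
Inductive vtx := VInt of int | VNew of nat.

Definition vtx_code (v : vtx) : int + nat :=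
  match v with VInt z => inl z | VNew k => inr k end.
Definition vtx_decode (c : int + nat) : vtx :=
  match c with inl z => VInt z | inr k => VNew k end.
Lemma vtx_codeK : cancel vtx_code vtx_decode.
Proof. by case. Qed.
HB.instance Definition _ := Equality.copy vtx (can_type vtx_codeK).

(* State of the necklace construction after j steps (the disc
   triangulation D_j).  The boundary of the unbounded complementary region
   of D_j in the closed upper half-plane is
      ... , bint-2, bint-1, bint, rev bstk | rstk, rint, rint+1, ...
   read from -oo to +oo: the blue endpoint of the active edge is the head of
   [bstk ++ (bint, bint-1, ...)], its counterclockwise boundary neighbour is
   the next element; symmetrically for red with rstk / rint (clockwise).
   [edges] is the list (with multiplicity) of edges of D_j, [faces] the list
   of triangles in order of creation. *)
Record state := State {
  bstk : seq vtx; bint : int;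
  rstk : seq vtx; rint : int;
  edges : seq (vtx * vtx);
  faces : seq (vtx * vtx * vtx) }.

Definition init_state : state :=
  State [::] 0%Z [::] 1%Z [:: (VInt 0%Z, VInt 1%Z)] [::].

Definition blue_end (s : state) : vtx := head (VInt (bint s)) (bstk s).
Definition red_end (s : state) : vtx := head (VInt (rint s)) (rstk s).

Definition step (j : nat) (x : letter) (s : state) : state :=
  let b := blue_end s in let r := red_end s in
  match x with
  | LB =>
    let v := VNew j in
    State (v :: bstk s) (bint s) (rstk s) (rint s)
          (edges s ++ [:: (b, v); (r, v)]) (rcons (faces s) (b, r, v))
  | LR =>
    let v := VNew j in
    State (bstk s) (bint s) (v :: rstk s) (rint s)
          (edges s ++ [:: (b, v); (r, v)]) (rcons (faces s) (b, r, v))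
  | Lb => (* b_{j+1} = ccw boundary neighbour of b_j; triangle (b_{j+1}, b_j, r_j) *)
    match bstk s with
    | _ :: st =>
      let b' := head (VInt (bint s)) st in
      State st (bint s) (rstk s) (rint s)
            (rcons (edges s) (b', r)) (rcons (faces s) (b', b, r))
    | [::] => (* b_j = m integer: b_{j+1} = m-1, add edge [m-1, m] *)
      let b' := VInt (bint s - 1)%R in
      State [::] (bint s - 1)%R (rstk s) (rint s)
            (edges s ++ [:: (b', b); (b', r)]) (rcons (faces s) (b', b, r))
    end
  | Lr => (* r_{j+1} = clockwise boundary neighbour of r_j; triangle (b_j, r_j, r_{j+1}) *)
    match rstk s with
    | _ :: st =>
      let r' := head (VInt (rint s)) st in
      State (bstk s) (bint s) st (rint s)
            (rcons (edges s) (b, r')) (rcons (faces s) (b, r, r'))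
    | [::] => (* r_j = m integer: r_{j+1} = m+1, add edge [m, m+1] *)
      let r' := VInt (rint s + 1)%R in
      State (bstk s) (bint s) [::] (rint s + 1)%R
            (edges s ++ [:: (r, r'); (b, r')]) (rcons (faces s) (b, r, r'))
    end
  end.

(* Run the construction on x_1 ... x_n; step t (1-based) reads x_t. *)
Fixpoint run_from (t : nat) (X : seq letter) (s : state) : state :=
  match X with
  | [::] => s
  | x :: X' => run_from t.+1 X' (step t x s)
  end.

Definition necklace (X : seq letter) : state := run_from 1 X init_state.

Definition rooted_necklace (X : seq letter) (k : nat) : state * nat :=
  (necklace X, k).

(* Degree of v in the graph of the (rooted) triangulation: number of edge
   incidences (edges counted with multiplicity; no loops occur). *)
Definition deg (T : state * nat) (v : vtx) : nat :=
  count (fun e => e.1 == v) (edges T.1) + count (fun e => e.2 == v) (edges T.1).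

Definition face (T : state * nat) (j : nat) : vtx * vtx * vtx :=
  nth (VInt 0%Z, VInt 0%Z, VInt 0%Z) (faces T.1) j.-1.

Definition face_vertex (f : vtx * vtx * vtx) (i : 'I_3) : vtx :=
  match val i with 0 => f.1.1 | 1 => f.1.2 | _ => f.2 end.

(* The word x_1 ... x_n encoded by w : 'I_n -> letter (x_{t+1} = w t). *)
Definition word_of (n : nat) (w : {ffun 'I_n -> letter}) : seq letter :=
  [seq w t | t <- enum 'I_n].

(* Sample space: (x_1..x_n, k) uniform on {B,b,R,r}^n x {1..n};
   the pair (w, k0) with k0 : 'I_n encodes k = k0 + 1. *)
Definition prob_deg_ge (n j : nat) (i : 'I_3) (m : nat) : R :=
  Rdiv (INR #|[set p : {ffun 'I_n -> letter} * 'I_n |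
           let T := rooted_necklace (word_of p.1) (val p.2).+1 in
           (m <= deg T (face_vertex (face T j) i))%N]|)
   (INR #|{: {ffun 'I_n -> letter} * 'I_n}|).

From Stdlib Require Import Reals Lra.
From mathcomp Require Import all_boot all_order all_algebra.
From mathcomp Require Import zify.

Set Implicit Arguments.
Unset Strict Implicit.
Unset Printing Implicit Defensive.

(* Write the uniform word as X ++ c :: Y, where |X| = j - 1 and the letter c
   creates face j.

   The construction is tracked through the two boundary chains (the blue
   and red boundary vertices, listed outwards from the active edge).  A
   vertex off the chains never gains an edge again; a vertex on a chain
   gains at most one edge per step, and only near the active edge.
   - Future bound [future_tail]: a vertex at boundary position p gains z
     more edges along at most a fraction [tail_bound p z] ~ rho^z of the
     continuations Y, rho = 13/16 (induction on |Y| via the one-step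
     inequality [tail_bound_step]).
   - Past bound [past_sum_bound]: averaged over the prefixes X, the degree
     a of the vertex at depth d of a chain satisfies
     E[rho^(z - a)] <= past_bound z = (3z/10 + 1) rho^z (induction on |X|
     via [chain_deg_step]).
   - Combination [deg_event_count]: [face_vertex_tail] expresses the
     vertices of the new face through chain vertices of the state before
     step j, giving P[deg >= m] <= past_bound (m - 3); finally
     [prob_bound_numeric] shows past_bound (m - 3) <= 2 (3/4)^(m/4). *)

Definition blue_chain (s : state) : seq vtx := rcons (bstk s) (VInt (bint s)).
Definition red_chain (s : state) : seq vtx := rcons (rstk s) (VInt (rint s)).
Definition chain (b : bool) (s : state) : seq vtx :=
  if b then blue_chain s else red_chain s.

Definition present (t : nat) (s : state) (v : vtx) : bool :=
  match v with
  | VNew k => (k < t)%N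
  | VInt z => ((bint s <= z) && (z <= rint s))%R
  end.

(* It is the invariant that makes degrees computable from the
   position of a vertex in the chains. *)
Definition wf (t : nat) (s : state) : bool :=
  [&& uniq (blue_chain s ++ red_chain s),
      all (present t s) (blue_chain s ++ red_chain s)
    & all (fun e => present t s e.1 && present t s e.2) (edges s)].

Definition step_edges (t : nat) (x : letter) (s : state) : seq (vtx * vtx) :=
  let b := blue_end s in let r := red_end s in
  match x with
  | LB | LR => [:: (b, VNew t); (r, VNew t)]
  | Lb => match bstk s with
          | _ :: st => [:: (head (VInt (bint s)) st, r)]
          | [::] => [:: (VInt (bint s - 1)%R, b); (VInt (bint s - 1)%R, r)] end
  | Lr => match rstk s with
          | _ :: st => [:: (b, head (VInt (rint s)) st)]
          | [::] => [:: (r, VInt (rint s + 1)%R); (b, VInt (rint s + 1)%R)] end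
  end.

Definition step_face (t : nat) (x : letter) (s : state) : vtx * vtx * vtx :=
  let b := blue_end s in let r := red_end s in
  match x with
  | LB | LR => (b, r, VNew t)
  | Lb => match bstk s with
          | _ :: st => (head (VInt (bint s)) st, b, r)
          | [::] => (VInt (bint s - 1)%R, b, r) end
  | Lr => match rstk s with
          | _ :: st => (b, r, head (VInt (rint s)) st)
          | [::] => (b, r, VInt (rint s + 1)%R) end
  end.

Lemma edges_step t x s : edges (step t x s) = edges s ++ step_edges t x s.
Proof.
case: x; rewrite /step /step_edges //=.
  by case: (bstk s) => [|y st] //=; rewrite cats1.
by case: (rstk s) => [|y st] //=; rewrite cats1.
Qed.

Lemma faces_step t x s : faces (step t x s) = rcons (faces s) (step_face t x s).
Proof.
case: x; rewrite /step /step_face //=.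
  by case: (bstk s) => [|y st].
by case: (rstk s) => [|y st].
Qed.

Lemma step_face_ends t x s : step_face t x s = match x with
  | LB => (blue_end s, red_end s, blue_end (step t x s))
  | LR => (blue_end s, red_end s, red_end (step t x s))
  | Lb => (blue_end (step t x s), blue_end s, red_end s)
  | Lr => (blue_end s, red_end s, red_end (step t x s)) end.
Proof.
case: x; rewrite /step_face /step /blue_end /red_end //=.
  by case: (bstk s).
by case: (rstk s).
Qed.

Lemma bint_step t x s : (bint (step t x s) <= bint s)%R.
Proof.
case: x; rewrite /step /=; try case: (bstk s); try case: (rstk s);
  intros; simpl; lia.
Qed.

Lemma rint_step t x s : (rint s <= rint (step t x s))%R.
Proof.
case: x; rewrite /step /=; try case: (bstk s); try case: (rstk s);
  intros; simpl; lia.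
Qed.

Lemma present_step t x s v : present t s v -> present t.+1 (step t x s) v.
Proof.
have := bint_step t x s; have := rint_step t x s.
by case: v => [z|k] /= hr hb; [case/andP => *; apply/andP; split; lia | lia].
Qed.

Lemma blue_chain_step t x s : blue_chain (step t x s) =
  match x with
  | LB => VNew t :: blue_chain s
  | Lb => if bstk s is _ :: _ then behead (blue_chain s)
          else [:: VInt (bint s - 1)%R]
  | _ => blue_chain s end.
Proof. by case: x; rewrite /step /blue_chain //=; case: (bstk s); case: (rstk s). Qed.

Lemma red_chain_step t x s : red_chain (step t x s) =
  match x with
  | LR => VNew t :: red_chain s
  | Lr => if rstk s is _ :: _ then behead (red_chain s)
          else [:: VInt (rint s + 1)%R]
  | _ => red_chain s end.
Proof. by case: x; rewrite /step /red_chain //=; case: (bstk s); case: (rstk s). Qed.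

Lemma blue_end_nth s : blue_end s = nth (VInt 0) (blue_chain s) 0.
Proof. by rewrite /blue_end /blue_chain; case: (bstk s). Qed.
Lemma red_end_nth s : red_end s = nth (VInt 0) (red_chain s) 0.
Proof. by rewrite /red_end /red_chain; case: (rstk s). Qed.

Lemma blue_end_chain s : blue_end s \in blue_chain s.
Proof. by rewrite blue_end_nth mem_nth // size_rcons. Qed.
Lemma red_end_chain s : red_end s \in red_chain s.
Proof. by rewrite red_end_nth mem_nth // size_rcons. Qed.

Lemma head_in_rcons (T : eqType) (st : seq T) z : head z st \in rcons st z.
Proof. by case: st => [|y st] /=; rewrite inE eqxx ?orbT. Qed.

Lemma fresh_not_present t s :
  [/\ ~~ present t s (VNew t), ~~ present t s (VInt (bint s - 1)%R)
    & ~~ present t s (VInt (rint s + 1)%R)].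
Proof. by rewrite /= ltnn; split => //; apply/negP; case/andP => *; lia. Qed.

Lemma notin_absent t s (L : seq vtx) v :
  all (present t s) L -> ~~ present t s v -> v \notin L.
Proof. by move=> /allP H; apply: contra => /H. Qed.

Lemma fresh_neq t s v : present t s v ->
  [/\ (VNew t == v) = false, (VInt (bint s - 1)%R == v) = false
    & (VInt (rint s + 1)%R == v) = false].
Proof.
have [h1 h2 h3] := fresh_not_present t s => pv.
by split; apply: contraTF pv => /eqP <-.
Qed.

Lemma wf_present t s u : wf t s -> u \in blue_chain s ++ red_chain s -> present t s u.
Proof. by case/and3P => _ A _ /(allP A). Qed.

Lemma wf_window t s : wf t s -> (bint s <= rint s)%R.
Proof.
move=> w; have : VInt (bint s) \in blue_chain s ++ red_chain s.
  by rewrite mem_cat /blue_chain mem_rcons inE eqxx.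
by move/(wf_present w) => /andP [].
Qed.

Lemma present_after t x s u : wf t s -> u \in blue_chain s ++ red_chain s ->
  present t.+1 (step t x s) u.
Proof. by case/and3P => _ A _ /(allP A); apply: present_step. Qed.

Lemma chains_uniq_step t x s : wf t s ->
  uniq (blue_chain (step t x s) ++ red_chain (step t x s)).
Proof.
case/and3P => U A _; have [nN nB nR] := fresh_not_present t s.
rewrite blue_chain_step red_chain_step; case: x.
- by rewrite cat_cons /= U andbT (notin_absent A nN).
- move: U A; rewrite /blue_chain; case: (bstk s) => [|y st] /= U A; last first.
    by case/andP: U.
  case/andP: U => _ ->; rewrite andbT.
  by case/andP: A => _ A; apply: notin_absent A nB.
- by rewrite -cat1s uniq_catCA cat1s cons_uniq U andbT (notin_absent A nN).
- move: U A; rewrite /red_chain; case: (rstk s) => [|y st] /= U A; last first.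
    by move: U; rewrite -cat1s uniq_catCA cat1s cons_uniq => /andP [].
  rewrite -cat1s uniq_catCA cat1s cons_uniq cats0; apply/andP; split.
    by move: A; rewrite all_cat => /andP [A _]; apply: notin_absent A nR.
  by move: U; rewrite cat_uniq => /andP [].
Qed.

Lemma chains_present_step t x s : wf t s ->
  all (present t.+1 (step t x s)) (blue_chain (step t x s) ++ red_chain (step t x s)).
Proof.
move=> w; rewrite all_cat blue_chain_step red_chain_step; apply/andP; split.
- case: x.
  + apply/andP; split; first by rewrite /= ltnSn.
    by apply/allP => u uB; apply: present_after; rewrite ?mem_cat ?uB.
  + have := @present_after t Lb s; rewrite /blue_chain.
    case E: (bstk s) => [|y st] /= old.
      by have := wf_window w; rewrite /step E /= andbT => ?; apply/andP; split; lia.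
    by apply/allP => u uB; apply: old => //; rewrite in_cons mem_cat uB orbT.
  + by apply/allP => u uB; apply: present_after; rewrite ?mem_cat ?uB.
  + by apply/allP => u uB; apply: present_after; rewrite ?mem_cat ?uB.
- case: x.
  + by apply/allP => u uR; apply: present_after; rewrite ?mem_cat ?uR ?orbT.
  + by apply/allP => u uR; apply: present_after; rewrite ?mem_cat ?uR ?orbT.
  + apply/andP; split; first by rewrite /= ltnSn.
    by apply/allP => u uR; apply: present_after; rewrite ?mem_cat ?uR ?orbT.
  + have := @present_after t Lr s; rewrite /red_chain.
    case E: (rstk s) => [|y st] /= old.
      by have := wf_window w; rewrite /step E /= andbT => ?; apply/andP; split; lia.
    by apply/allP => u uR; apply: old => //; rewrite mem_cat in_cons uR !orbT.
Qed.

Lemma edges_present_step t x s : wf t s ->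
  all (fun e => present t.+1 (step t x s) e.1 && present t.+1 (step t x s) e.2)
      (edges (step t x s)).
Proof.
move=> w; have old := @present_after t x s _ w.
have E : all (fun e => present t s e.1 && present t s e.2) (edges s) by case/and3P: w.
have pb : present t.+1 (step t x s) (blue_end s).
  by apply: old; rewrite mem_cat blue_end_chain.
have pr : present t.+1 (step t x s) (red_end s).
  by apply: old; rewrite mem_cat red_end_chain orbT.
rewrite edges_step all_cat; apply/andP; split.
  by apply/allP => e /(allP E) /andP [e1 e2]; rewrite !present_step.
rewrite /step_edges; case: x old pb pr => old pb pr /=.
- by rewrite pb pr ltnSn.
- move: old pb pr; rewrite /step /blue_end /blue_chain.
  case E1: (bstk s) => [|y st] /= old pb pr; last first.
    by rewrite pr andbT old // in_cons mem_cat head_in_rcons orbT.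
  have := wf_window w.
  by rewrite pb /= ?andbT => ?; repeat (apply/andP; split); lia.
- by rewrite pb pr ltnSn.
- move: old pb pr; rewrite /step /red_end /red_chain.
  case E1: (rstk s) => [|y st] /= old pb pr; last first.
    by rewrite pb old // mem_cat in_cons head_in_rcons !orbT.
  have := wf_window w.
  by rewrite pr /= ?andbT => ?; repeat (apply/andP; split); lia.
Qed.

Lemma wf_step t x s : wf t s -> wf t.+1 (step t x s).
Proof.
by move=> w; rewrite /wf chains_uniq_step ?chains_present_step ?edges_present_step.
Qed.

Definition deg_in (E : seq (vtx * vtx)) (v : vtx) : nat :=
  (count (fun e => e.1 == v) E + count (fun e => e.2 == v) E)%N.

Lemma deg_in_cat E1 E2 v : deg_in (E1 ++ E2) v = (deg_in E1 v + deg_in E2 v)%N.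
Proof. rewrite /deg_in !count_cat; lia. Qed.

Lemma deg_absent t s u : wf t s -> ~~ present t s u -> deg_in (edges s) u = 0%N.
Proof.
case/and3P => _ _ E pu; rewrite /deg_in.
suff [-> ->] : count (fun e => e.1 == u) (edges s) = 0%N /\
               count (fun e => e.2 == u) (edges s) = 0%N by [].
by split; apply/eqP; rewrite -leqn0 leqNgt -has_count; apply/hasP => -[e eI /eqP eu];
  move: (allP E e eI) => /andP []; rewrite eu (negbTE pu) ?andbF.
Qed.

(* The position of a vertex on the boundary: depth d in the blue or red
   chain, or off the boundary (then it never gains an edge again). *)
Inductive position := Blue of nat | Red of nat | Off.

Definition pos (s : state) (v : vtx) : position :=
  if v \in blue_chain s then Blue (index v (blue_chain s))
  else if v \in red_chain s then Red (index v (red_chain s)) else Off.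

Definition pos_next (x : letter) (p : position) : position :=
  match p with
  | Blue d => match x with
              | LB => Blue d.+1 | Lb => if d is d'.+1 then Blue d' else Off
              | _ => Blue d end
  | Red d => match x with
             | LR => Red d.+1 | Lr => if d is d'.+1 then Red d' else Off
             | _ => Red d end
  | Off => Off
  end.

(* Number of edges gained by the vertex at depth d of a chain from one
   letter; [popping] says whether the letter pops this chain and [e]
   whether its stack is empty (the chain is a single integer).  Only depth
   0 gains an edge, except that a pop gives it to depth 1 instead. *)
Definition gain_at (popping : bool) (d : nat) (e : bool) : nat :=
  if popping then (if e then 1 else (d == 1)%N) else (d == 0)%N.

Definition gain (x : letter) (p : position) (eb er : bool) : nat :=
  match p with
  | Blue d => gain_at (x == Lb) d eb
  | Red d => gain_at (x == Lr) d er
  | Off => 0%N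
  end.

Definition gain_of (x : letter) (p : position) (s : state) : nat :=
  gain x p (nilp (bstk s)) (nilp (rstk s)).

Lemma neq_notin (T : eqType) (w v : T) (L : seq T) : w \in L -> v \notin L -> (w == v) = false.
Proof. by move=> wL; apply: contraNF => /eqP <-. Qed.

Lemma nth_eq_index (T : eqType) (L : seq T) i v x0 : uniq L -> v \in L -> (i < size L)%N ->
  (nth x0 L i == v) = (i == index v L).
Proof. by move=> U vL iL; rewrite -{1}(nth_index x0 vL) nth_uniq // index_mem. Qed.

Section Gain.
Variables (t : nat) (s : state) (v : vtx).
Hypotheses (ws : wf t s) (pv : present t s v).

Let blue_uniq : uniq (blue_chain s).
Proof. by case/and3P: ws; rewrite cat_uniq => /and3P []. Qed.
Let red_uniq : uniq (red_chain s).
Proof. by case/and3P: ws; rewrite cat_uniq => /and3P []. Qed.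
Let blue_red : v \in blue_chain s -> v \notin red_chain s.
Proof.
case/and3P: ws; rewrite cat_uniq => /and3P [_ BR _] _ _ vB.
by apply: contra BR => vR; apply/hasP; exists v.
Qed.

Lemma gain_blue x : v \in blue_chain s ->
  deg_in (step_edges t x s) v = gain_at (x == Lb) (index v (blue_chain s)) (nilp (bstk s)).
Proof.
move=> vB; have [fN fbm frp] := fresh_neq pv; have vR := blue_red vB.
have eb : (blue_end s == v) = (index v (blue_chain s) == 0)%N.
  by rewrite blue_end_nth (nth_eq_index _ blue_uniq vB) // /blue_chain size_rcons.
have er : (red_end s == v) = false by apply: neq_notin vR; apply: red_end_chain.
case: x; rewrite /step_edges /deg_in /gain_at /= ?eb ?er ?fN ?addn0 //.
  case E1: (bstk s) => [|y st] /=.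
    have d0 : index v (blue_chain s) = 0%N.
      by move: vB; rewrite /blue_chain E1 inE /= => /eqP ->; rewrite eqxx.
    by rewrite fbm er eb d0.
  have -> : head (VInt (bint s)) st = nth (VInt 0) (blue_chain s) 1.
    by rewrite /blue_chain E1; case: (st).
  rewrite (nth_eq_index _ blue_uniq vB); last by rewrite /blue_chain E1 size_rcons.
  by rewrite er !addn0 eq_sym.
case E1: (rstk s) => [|y st] /=; rewrite ?er ?eb ?frp ?addn0 //.
by rewrite (neq_notin _ vR) ?addn0 // /red_chain E1 /= in_cons head_in_rcons orbT.
Qed.

Lemma gain_red x : v \notin blue_chain s -> v \in red_chain s ->
  deg_in (step_edges t x s) v = gain_at (x == Lr) (index v (red_chain s)) (nilp (rstk s)).
Proof.
move=> vB vR; have [fN fbm frp] := fresh_neq pv.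
have eb : (blue_end s == v) = false by apply: neq_notin vB; apply: blue_end_chain.
have er : (red_end s == v) = (index v (red_chain s) == 0)%N.
  by rewrite red_end_nth (nth_eq_index _ red_uniq vR) // /red_chain size_rcons.
case: x; rewrite /step_edges /deg_in /gain_at /= ?eb ?er ?fN ?addn0 //.
  case E1: (bstk s) => [|y st] /=; rewrite ?fbm ?eb ?er ?addn0 //.
  by rewrite (neq_notin _ vB) // /blue_chain E1 /= in_cons head_in_rcons orbT.
case E1: (rstk s) => [|y st] /=.
  have d0 : index v (red_chain s) = 0%N.
    by move: vR; rewrite /red_chain E1 inE /= => /eqP ->; rewrite eqxx.
  by rewrite frp eb er d0.
have -> : head (VInt (rint s)) st = nth (VInt 0) (red_chain s) 1.
  by rewrite /red_chain E1; case: (st).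
rewrite (nth_eq_index _ red_uniq vR); last by rewrite /red_chain E1 size_rcons.
by rewrite eb !addn0 eq_sym.
Qed.

Lemma gain_off x : v \notin blue_chain s -> v \notin red_chain s ->
  deg_in (step_edges t x s) v = 0%N.
Proof.
move=> vB vR; have [fN fbm frp] := fresh_neq pv.
have eb : (blue_end s == v) = false by apply: neq_notin vB; apply: blue_end_chain.
have er : (red_end s == v) = false by apply: neq_notin vR; apply: red_end_chain.
case: x; rewrite /step_edges /deg_in /= ?eb ?er ?fN //.
  case E1: (bstk s) => [|y st] /=; rewrite ?fbm ?eb ?er //.
  by rewrite (neq_notin _ vB) // /blue_chain E1 /= in_cons head_in_rcons orbT.
case E1: (rstk s) => [|y st] /=; rewrite ?frp ?eb ?er //.
by rewrite (neq_notin _ vR) // /red_chain E1 /= in_cons head_in_rcons orbT.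
Qed.

Lemma step_gain x : deg_in (step_edges t x s) v = gain_of x (pos s v) s.
Proof.
rewrite /pos /gain_of; case: ifPn => vB; first exact: gain_blue.
by case: ifPn => vR; [apply: gain_red | apply: gain_off].
Qed.

End Gain.

Lemma notin_blue_step t x s v : present t s v -> v \notin blue_chain s ->
  v \notin blue_chain (step t x s).
Proof.
move=> pv vB; have [fN fbm _] := fresh_neq pv.
rewrite blue_chain_step; case: x => //.
- by rewrite in_cons negb_or eq_sym fN.
- move: vB; rewrite /blue_chain; case: (bstk s) => [|y st] /=.
    by rewrite !inE => _; rewrite eq_sym fbm.
  by rewrite in_cons negb_or => /andP [].
Qed.

Lemma notin_red_step t x s v : present t s v -> v \notin red_chain s ->
  v \notin red_chain (step t x s).
Proof.
move=> pv vR; have [fN _ frp] := fresh_neq pv.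
rewrite red_chain_step; case: x => //.
- by rewrite in_cons negb_or eq_sym fN.
- move: vR; rewrite /red_chain; case: (rstk s) => [|y st] /=.
    by rewrite !inE => _; rewrite eq_sym frp.
  by rewrite in_cons negb_or => /andP [].
Qed.

Lemma pos_step t x s v : wf t s -> present t s v ->
  pos (step t x s) v = pos_next x (pos s v).
Proof.
move=> ws pv; have [fN fbm frp] := fresh_neq pv.
have [UB UBR UR] : [/\ uniq (blue_chain s), ~~ has (mem (blue_chain s)) (red_chain s)
    & uniq (red_chain s)] by case/and3P: ws; rewrite cat_uniq => /and3P [].
rewrite /pos; have [vB|vB] := boolP (v \in blue_chain s); rewrite ?vB ?(negbTE vB).
- have vR : v \notin red_chain s by apply: contra UBR => vR; apply/hasP; exists v.
  rewrite (negbTE (notin_red_step x pv vR)) blue_chain_step; case: x; rewrite ?vB //.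
  + by rewrite in_cons vB orbT /= fN.
  move: vB UB; rewrite /blue_chain; case: (bstk s) => [|y st] /=.
    by rewrite !inE [v == VInt (bint s - 1)%R]eq_sym fbm => /eqP -> _; rewrite eqxx.
  rewrite in_cons => vB /andP [yn _]; have [<-|yv] := eqVneq y v.
    by rewrite (negbTE yn).
  by move: vB; rewrite eq_sym (negbTE yv) /= => ->.
- rewrite (negbTE (notin_blue_step x pv vB)).
  have [vR|vR] := boolP (v \in red_chain s); rewrite ?vR ?(negbTE vR); last first.
    by rewrite (negbTE (notin_red_step x pv vR)).
  rewrite red_chain_step; case: x; rewrite ?vR //.
  + by rewrite in_cons vR orbT /= fN.
  move: vR UR; rewrite /red_chain; case: (rstk s) => [|y st] /=.
    by rewrite !inE [v == VInt (rint s + 1)%R]eq_sym frp => /eqP -> _; rewrite eqxx.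
  rewrite in_cons => vR /andP [yn _]; have [<-|yv] := eqVneq y v.
    by rewrite (negbTE yn).
  by move: vR; rewrite eq_sym (negbTE yv) /= => ->.
Qed.

Fixpoint words (L : nat) : seq (seq letter) :=
  match L with
  | 0 => [:: [::]]
  | L'.+1 => let W := words L' in
     [seq LB :: Y | Y <- W] ++ [seq Lb :: Y | Y <- W] ++
     [seq LR :: Y | Y <- W] ++ [seq Lr :: Y | Y <- W]
  end.

Lemma size_words L : size (words L) = (4 ^ L)%N.
Proof. elim: L => //= L IH; rewrite !size_cat !size_map IH expnS; lia. Qed.

Lemma mem_words L W : (W \in words L) = (size W == L).
Proof.
apply/idP/eqP.
  elim: L W => [|L IH] W /=; first by rewrite inE => /eqP ->.
  by rewrite !mem_cat => /or4P [] /mapP [Y /IH <- ->].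
elim: L W => [|L IH] [|x W] //= [/IH WL].
by case: x; rewrite !mem_cat ?(map_f (cons _) WL) ?orbT.
Qed.

Lemma words_uniq L : uniq (words L).
Proof.
have disj (x y : letter) (W1 W2 : seq (seq letter)) : x != y ->
    ~~ has (mem (map (cons x) W1)) (map (cons y) W2).
  move=> xy; apply/hasPn => z /mapP [Y _ ->]; apply/negP => /mapP [Y' _ [e _]].
  by move: xy; rewrite e eqxx.
elim: L => //= L IH; rewrite !cat_uniq !map_inj_uniq; try by move=> ? ? [].
by repeat (apply/andP; split); rewrite ?has_cat ?negb_or ?disj.
Qed.

Open Scope R_scope.

Fixpoint sumR (f : seq letter -> R) (l : seq (seq letter)) : R :=
  match l with [::] => 0 | x :: l' => f x + sumR f l' end.

Lemma sumR_cat f l1 l2 : sumR f (l1 ++ l2) = sumR f l1 + sumR f l2.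
Proof. elim: l1 => /= [|x l IH]; lra. Qed.
Lemma sumR_map f g l : sumR f (map g l) = sumR (fun x => f (g x)) l.
Proof. by elim: l => //= x l ->. Qed.
Lemma sumR_le f g l : (forall x, x \in l -> f x <= g x) -> sumR f l <= sumR g l.
Proof.
elim: l => /= [|x l IH] H; first lra.
apply: Rplus_le_compat; first by apply: H; rewrite inE eqxx.
by apply: IH => y yl; apply: H; rewrite inE yl orbT.
Qed.
Lemma sumR_add f g l : sumR (fun x => f x + g x) l = sumR f l + sumR g l.
Proof. elim: l => /= [|x l ->]; lra. Qed.
Lemma sumR_scal c f l : sumR (fun x => c * f x) l = c * sumR f l.
Proof. elim: l => /= [|x l ->]; lra. Qed.
Lemma sumR_const c l : sumR (fun _ => c) l = c * INR (size l).
Proof.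
elim: l => [|x l IH]; first by rewrite /= Rmult_0_r.
rewrite [LHS]/= IH; change (size (x :: l)) with (size l).+1; rewrite S_INR; ring.
Qed.

Lemma count_sumR (P : pred (seq letter)) l :
  INR (count P l) = sumR (fun W => if P W then 1 else 0) l.
Proof. by elim: l => //= x l <-; rewrite plus_INR; case: (P x) => /=; lra. Qed.

Lemma sumR_words f L : sumR f (words L.+1) =
  sumR (fun Y => f (LB :: Y)) (words L) + sumR (fun Y => f (Lb :: Y)) (words L) +
  sumR (fun Y => f (LR :: Y)) (words L) + sumR (fun Y => f (Lr :: Y)) (words L).
Proof. rewrite /= !sumR_cat !sumR_map; lra. Qed.

Lemma sumR_words_rcons f L : sumR f (words L.+1) =
  sumR (fun X => f (rcons X LB) + f (rcons X Lb) + f (rcons X LR) + f (rcons X Lr))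
       (words L).
Proof.
elim: L f => [|L IH] f; first by rewrite /=; lra.
rewrite [in RHS]sumR_words sumR_words !IH /=; lra.
Qed.

Lemma sumR_words_add f a b : sumR f (words (a + b)) =
  sumR (fun X => sumR (fun Y => f (X ++ Y)) (words b)) (words a).
Proof.
elim: a f => [|a IH] f; first by rewrite add0n /= Rplus_0_r.
by rewrite addSn !sumR_words !IH.
Qed.

Lemma INR_expn4 p : INR (4 ^ p)%N = 4 ^ p.
Proof. elim: p => [|p IH] //; rewrite expnS mult_INR IH /=; lra. Qed.

Lemma pow_anti (c : R) a b : 0 <= c <= 1 -> (a <= b)%N -> c ^ b <= c ^ a.
Proof.
move=> hc ab; rewrite -(subnKC ab) pow_add.
have h1 : 0 <= c ^ a by apply: pow_le; lra.
have h2 : c ^ (b - a) <= 1 by rewrite -(pow1 (b - a)); apply: pow_incr; lra.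
nra.
Qed.

Close Scope R_scope.

Fixpoint future_deg (t : nat) (Y : seq letter) (s : state) (v : vtx) : nat :=
  match Y with
  | [::] => 0%N
  | x :: Y' => (deg_in (step_edges t x s) v + future_deg t.+1 Y' (step t x s) v)%N
  end.

Lemma deg_run t Y s v :
  deg_in (edges (run_from t Y s)) v = (deg_in (edges s) v + future_deg t Y s v)%N.
Proof.
elim: Y t s => [|x Y IH] t s /=; first by rewrite addn0.
by rewrite IH edges_step deg_in_cat addnA.
Qed.

Open Scope R_scope.

(* The decay rate of the tail bounds: a ratio for which the one-step
   inequalities [tail_step_top] and [past_bound_rec] hold (a vertex at
   depth 0 gains an edge from three of the four letters). *)
Definition rho : R := 13 / 16.

Lemma rho_bounds : 0 <= rho <= 1.
Proof. rewrite /rho; lra. Qed.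

Lemma rho_pow_ge0 n : 0 <= rho ^ n.
Proof. by apply: pow_le; case: rho_bounds. Qed.

Lemma rho_pow_anti a b : (a <= b)%N -> rho ^ b <= rho ^ a.
Proof. exact/pow_anti/rho_bounds. Qed.

(* Tail bound for the future degree of a vertex at position p: it bounds
   the fraction of continuations giving at least z more edges. *)
Definition tail_bound (p : position) (z : nat) : R :=
  match p with
  | Blue 0 | Red 0 => rho ^ (z - 1)
  | Blue _ | Red _ => rho ^ (z - 2)
  | Off => if z == 0%N then 1 else 0
  end.

Lemma tail_bound_ge0 p z : 0 <= tail_bound p z.
Proof. case: p => [[|d]|[|d]|] /=; try apply: rho_pow_ge0; case: (z == 0)%N; lra. Qed.

Lemma tail_bound0 p : tail_bound p 0 = 1.
Proof. by case: p => [[|d]|[|d]|]. Qed.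

(* The one-step inequality at depth 0: the vertex gains one edge (or c
   edges when its own letter pops it) and moves to depth 1 once. *)
Lemma tail_step_top z (c : nat) : (c <= 1)%N ->
  rho ^ (z - 1 - 2) + (if (z - c == 0)%N then 1 else 0)
    + rho ^ (z - 1 - 1) + rho ^ (z - 1 - 1) <= 4 * rho ^ (z - 1).
Proof.
move=> hc; case: z => [|[|[|k]]]; rewrite ?subSS ?subn0 ?subn1 /=.
- lra.
- case: (1 - c == 0)%N; lra.
- have -> : (2 - c == 0)%N = false by apply/eqP; lia.
  rewrite /rho; lra.
- have -> : (k.+3 - c == 0)%N = false by apply/eqP; lia.
  rewrite /= ?subn0; have := rho_pow_ge0 k; rewrite /rho; nra.
Qed.

(* The tail bound is superharmonic: averaging it over the next letter
   (after accounting for the edges gained) does not increase it.  The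
   hypotheses say a vertex deeper than 0 is not on a one-vertex chain. *)
Lemma tail_bound_step p (eb er : bool) z :
  (eb -> forall d, p <> Blue d.+1) -> (er -> forall d, p <> Red d.+1) ->
  tail_bound (pos_next LB p) (z - gain LB p eb er)
  + tail_bound (pos_next Lb p) (z - gain Lb p eb er)
  + tail_bound (pos_next LR p) (z - gain LR p eb er)
  + tail_bound (pos_next Lr p) (z - gain Lr p eb er) <= 4 * tail_bound p z.
Proof.
move=> hb hr; case: p hb hr => [[|[|d]]|[|[|d]]|] hb hr /=.
- by apply: tail_step_top; case: eb {hb}.
- rewrite !subn0; case: eb hb => _ /=; rewrite -?subnDA ?addn1; lra.
- case: eb hb => hb; first by case: (hb erefl d.+1 erefl).
  rewrite /= !subn0; lra.
- have := @tail_step_top z (if er then 1 else 0)%N; case: er {hr} => /= h.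
    by have := h erefl; lra.
  by have := h erefl; lra.
- rewrite !subn0; case: er hr => _ /=; rewrite -?subnDA ?addn1; lra.
- case: er hr => hr; first by case: (hr erefl d.+1 erefl).
  rewrite /= !subn0; lra.
- rewrite !subn0; case: (z == 0)%N; lra.
Qed.

Lemma pos_blue_depth s v d : pos s v = Blue d -> (d < size (blue_chain s))%N.
Proof. by rewrite /pos; case: ifP => [vB [<-]|_]; [rewrite index_mem | case: ifP]. Qed.

Lemma pos_red_depth s v d : pos s v = Red d -> (d < size (red_chain s))%N.
Proof. by rewrite /pos; case: ifP => _; [|case: ifP => [vR [<-]|//]; rewrite index_mem]. Qed.

Lemma future_tail L : forall t s v z, wf t s -> present t s v ->
  sumR (fun Y => if (z <= future_deg t Y s v)%N then 1 else 0) (words L)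
  <= tail_bound (pos s v) z * 4 ^ L.
Proof.
elim: L => [|L IH] t s v z ws pv.
  rewrite /= Rmult_1_r; case: z => [|z] /=; rewrite ?tail_bound0; first lra.
  by have := tail_bound_ge0 (pos s v) z.+1; lra.
have first_letter x :
    sumR (fun Y => if (z <= future_deg t (x :: Y) s v)%N then 1 else 0) (words L) <=
    tail_bound (pos_next x (pos s v)) (z - gain_of x (pos s v) s) * 4 ^ L.
  rewrite -(pos_step x ws pv) -(step_gain ws pv x).
  apply: Rle_trans (IH t.+1 (step t x s) v _ (wf_step x ws) (present_step x pv)).
  by apply: sumR_le => Y _; rewrite /= leq_subLR; lra.
have hb : nilp (bstk s) -> forall d, pos s v <> Blue d.+1.
  by move=> /nilP E d /pos_blue_depth; rewrite /blue_chain E /=; lia.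
have hr : nilp (rstk s) -> forall d, pos s v <> Red d.+1.
  by move=> /nilP E d /pos_red_depth; rewrite /red_chain E /=; lia.
have := tail_bound_step z hb hr; rewrite sumR_words.
have := first_letter LB; have := first_letter Lb.
have := first_letter LR; have := first_letter Lr.
have := pow_le 4 L; have := tail_bound_ge0 (pos s v) z.
rewrite /gain_of [4 ^ L.+1]/=; nra.
Qed.

Close Scope R_scope.

Lemma run_cat t X Y s :
  run_from t (X ++ Y) s = run_from (t + size X) Y (run_from t X s).
Proof. by elim: X t s => [|x X IH] t s /=; rewrite ?addn0 // IH addSnnS. Qed.

Lemma necklace_rcons X x : necklace (rcons X x) = step (size X).+1 x (necklace X).
Proof. by rewrite /necklace -cats1 run_cat /= add1n. Qed.

Lemma wf_necklace X : wf (size X).+1 (necklace X).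
Proof.
elim/last_ind: X => [|X x IH]; first by [].
by rewrite necklace_rcons size_rcons; apply: wf_step.
Qed.

Lemma size_chain b s : (0 < size (chain b s))%N.
Proof. by case: b; rewrite /chain /blue_chain /red_chain size_rcons. Qed.

(* Beyond the end of the chain
   we use 1: a fresh integer entering a one-vertex chain by a pop (with two
   edges) then obeys the same recursion [chain_deg_step] as a vertex moving
   up from depth 1. *)
Definition chain_deg (s : state) (b : bool) (d : nat) : nat :=
  if (d < size (chain b s))%N then deg_in (edges s) (nth (VInt 0) (chain b s) d)
  else 1%N.

Lemma chain_deg_init b d : chain_deg init_state b d = 1%N.
Proof. by case: b; case: d. Qed.

Section ChainVertex.
Variables (t : nat) (s : state) (b : bool) (d : nat).
Hypotheses (ws : wf t s) (dS : (d < size (chain b s))%N).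

Let w := nth (VInt 0) (chain b s) d.

Lemma pos_nth : pos s w = if b then Blue d else Red d.
Proof.
case/and3P: ws => U _ _; move: U; rewrite cat_uniq => /and3P [UB UBR UR].
rewrite /pos /w /chain; case: b dS => /= dS'; first by rewrite mem_nth // index_uniq.
have wR := mem_nth (VInt 0) dS'.
have -> : (nth (VInt 0) (red_chain s) d \in blue_chain s) = false.
  by apply: contraNF UBR => wB; apply/hasP; exists (nth (VInt 0) (red_chain s) d).
by rewrite wR index_uniq.
Qed.

Lemma present_nth : present t s w.
Proof.
by apply: (wf_present ws); rewrite mem_cat /w; case: b dS => dS' /=; rewrite mem_nth ?orbT.
Qed.

Lemma chain_deg_gain x : deg_in (edges (step t x s)) w =
  (chain_deg s b d + gain_of x (if b then Blue d else Red d) s)%N.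
Proof. by rewrite edges_step deg_in_cat (step_gain ws present_nth) pos_nth /chain_deg dS. Qed.

End ChainVertex.

Definition push (b : bool) : letter := if b then LB else LR.
Definition pop (b : bool) : letter := if b then Lb else Lr.

Lemma chain_deg_push0 t s b : wf t s -> chain_deg (step t (push b) s) b 0 = 2%N.
Proof.
move=> ws.
have [fb _ _] := fresh_neq (present_nth (b:=true) ws (size_chain _ _)).
have [fr _ _] := fresh_neq (present_nth (b:=false) ws (size_chain _ _)).
move: fb fr; rewrite /chain -blue_end_nth -red_end_nth => fb fr.
have h0 : deg_in (edges s) (VNew t) = 0%N by apply: (deg_absent ws); rewrite /= ltnn.
by case: b; rewrite /chain_deg /chain edges_step deg_in_cat ?blue_chain_step
  ?red_chain_step /= h0 /deg_in /= ![_ == VNew t]eq_sym fb fr eqxx.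
Qed.

Lemma chain_deg_pushS t s b d : wf t s ->
  chain_deg (step t (push b) s) b d.+1 = (chain_deg s b d + (d == 0%N))%N.
Proof.
move=> ws.
have hL : chain b (step t (push b) s) = VNew t :: chain b s.
  by case: b; rewrite /chain ?blue_chain_step ?red_chain_step.
rewrite /chain_deg hL [size _]/= ltnS [nth _ _ _]/=; case: ifP => dS.
  by rewrite (chain_deg_gain ws dS) /chain_deg dS; case: b {hL} dS.
by have := size_chain b s; move/negbT: dS; rewrite -leqNgt; case: d => //; lia.
Qed.

Lemma chain_deg_other t s b d x : wf t s -> x != push b -> x != pop b ->
  chain_deg (step t x s) b d = (chain_deg s b d + (d == 0%N))%N.
Proof.
move=> ws h1 h2.
have hL : chain b (step t x s) = chain b s.
  by case: b h1 h2; case: x; rewrite /chain ?blue_chain_step ?red_chain_step.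
rewrite /chain_deg hL; case: ifP => dS.
  by rewrite (chain_deg_gain ws dS) /chain_deg dS; case: b {hL} dS h1 h2; case: x.
by have := size_chain b s; move/negbT: dS; rewrite -leqNgt; case: d => //; lia.
Qed.

Lemma VInt_eq a b : (VInt a == VInt b) = (a == b).
Proof. by apply/eqP/eqP => [[->]|->]. Qed.

(* Popping from a one-vertex chain: the new chain is the next integer,
   which enters with degree 2 (edges to the old end and the other end). *)
Lemma chain_deg_pop_int t s b d : wf t s ->
  (if b then bstk s else rstk s) = [::] ->
  chain_deg (step t (pop b) s) b d = (chain_deg s b d.+1 + (d == 0%N))%N.
Proof.
move=> ws E; rewrite /chain_deg; case: b E => E; rewrite /chain ?blue_chain_step
  ?red_chain_step /= E /= /blue_chain /red_chain E /=; case: d => [|d] //=.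
- rewrite deg_in_cat (deg_absent ws); last by apply/negP => /= /andP [h _]; lia.
  have [_ fr _] := fresh_neq (present_nth (b:=false) ws (size_chain _ _)).
  move: fr; rewrite /chain -red_end_nth => fr.
  rewrite /deg_in /= /blue_end E eqxx [red_end s == _]eq_sym fr VInt_eq.
  by have -> : (bint s == bint s - 1)%R = false by apply/eqP; lia.
- rewrite deg_in_cat (deg_absent ws); last by apply/negP => /= /andP [_ h]; lia.
  have [_ _ fb] := fresh_neq (present_nth (b:=true) ws (size_chain _ _)).
  move: fb; rewrite /chain -blue_end_nth => fb.
  rewrite /deg_in /= /red_end E eqxx [blue_end s == _]eq_sym fb VInt_eq.
  by have -> : (rint s == rint s + 1)%R = false by apply/eqP; lia.
Qed.

Lemma chain_deg_pop_stack t s b d y st : wf t s ->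
  (if b then bstk s else rstk s) = y :: st ->
  chain_deg (step t (pop b) s) b d = (chain_deg s b d.+1 + (d == 0%N))%N.
Proof.
move=> ws E.
have hL : chain b (step t (pop b) s) = behead (chain b s).
  by case: b E; rewrite /chain ?blue_chain_step ?red_chain_step /= => ->.
have hS : (1 < size (chain b s))%N.
  by case: b E {hL}; rewrite /chain /blue_chain /red_chain => -> /=; rewrite size_rcons.
rewrite /chain_deg hL size_behead nth_behead.
have -> : (d < (size (chain b s)).-1)%N = (d.+1 < size (chain b s))%N by lia.
case: ifP => dS; last by move/negbT: dS; rewrite -leqNgt; case: d => //; lia.
rewrite (chain_deg_gain ws dS) /chain_deg dS; congr (_ + _)%N.
by case: b E {hL hS dS} => /= E; rewrite /gain_of /= E /=; case: d.
Qed.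

Lemma chain_deg_step t s b d x : wf t s -> chain_deg (step t x s) b d =
  if x == push b then (if d is d'.+1 then (chain_deg s b d' + (d' == 0%N))%N else 2%N)
  else if x == pop b then (chain_deg s b d.+1 + (d == 0%N))%N
  else (chain_deg s b d + (d == 0%N))%N.
Proof.
move=> ws; case: eqP => [->|h1].
  by case: d => [|d]; [apply: chain_deg_push0 | apply: chain_deg_pushS].
case: eqP => [->|h2]; last by apply: chain_deg_other => //; apply/eqP.
case E: (if b then bstk s else rstk s) => [|y st].
  exact: chain_deg_pop_int.
exact: chain_deg_pop_stack E.
Qed.

Open Scope R_scope.

(* The linear factor accounts for the vertex at depth 0 gaining
   an edge at (almost) every step. *)
Definition past_sum (p : nat) (b : bool) (d z : nat) : R :=
  sumR (fun X => rho ^ (z - chain_deg (necklace X) b d)) (words p).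

Definition past_bound (z : nat) : R := (3 / 10 * INR z + 1) * rho ^ z.

Lemma past_bound_ge z : rho ^ z <= past_bound z.
Proof. rewrite /past_bound; have := pos_INR z; have := rho_pow_ge0 z; nra. Qed.

Lemma past_bound_init z : rho ^ (z - 1) <= past_bound z.
Proof.
rewrite /past_bound; case: z => [|z]; first by rewrite /=; lra.
rewrite S_INR; have -> : (z.+1 - 1)%N = z by lia.
rewrite [rho ^ z.+1]/=; have := pos_INR z; have := rho_pow_ge0 z; rewrite /rho; nra.
Qed.

Lemma past_bound_rec z :
  rho ^ (z - 2) + past_bound (z - 1 - 1) + 2 * past_bound (z - 1) <= 4 * past_bound z.
Proof.
rewrite /past_bound; case: z => [|[|[|k]]]; try by rewrite /= /rho; lra.
have -> : (k.+3 - 2)%N = k.+1 by lia.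
have -> : (k.+3 - 1 - 1)%N = k.+1 by lia.
have -> : (k.+3 - 1)%N = k.+2 by lia.
rewrite !S_INR [rho ^ k.+3]/= [rho ^ k.+2]/= [rho ^ k.+1]/=.
have := pos_INR k; have := rho_pow_ge0 k; rewrite /rho; nra.
Qed.

Lemma sub_addn1 a z : (z - (a + 1) = z - 1 - a)%N. Proof. lia. Qed.

Section PastStep.
Variables (p : nat) (b : bool).
Hypothesis IH0 : forall z, past_sum p b 0 z <= past_bound z * 4 ^ p.
Hypothesis IHS : forall d z, past_sum p b d.+1 z <= past_bound (z - 1) * 4 ^ p.

Let pow4_ge0 : 0 <= 4 ^ p. Proof. by apply: pow_le; lra. Qed.

(* The inductive step at depth 0 and at positive depth: condition on the
   last letter of the prefix and apply [chain_deg_step]. *)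
Lemma past_step0 z : past_sum p.+1 b 0 z <= past_bound z * 4 ^ p.+1.
Proof.
rewrite /past_sum sumR_words_rcons.
apply: Rle_trans (_ : sumR (fun X => rho ^ (z - 2)
    + rho ^ (z - 1 - chain_deg (necklace X) b 1)
    + 2 * rho ^ (z - 1 - chain_deg (necklace X) b 0)) (words p) <= _).
  apply: sumR_le => X _; have ws := wf_necklace X.
  rewrite !necklace_rcons !(chain_deg_step _ _ _ ws).
  by case: b => /=; rewrite !sub_addn1; lra.
rewrite !sumR_add sumR_const size_words INR_expn4 sumR_scal.
have := IH0 (z - 1)%N; have := IHS 0%N (z - 1)%N; have := past_bound_rec z.
rewrite /past_sum [4 ^ p.+1]/=; nra.
Qed.

Lemma past_stepS d z : past_sum p.+1 b d.+1 z <= past_bound (z - 1) * 4 ^ p.+1.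
Proof.
rewrite /past_sum sumR_words_rcons.
apply: Rle_trans (_ : sumR (fun X =>
      rho ^ (z - (chain_deg (necklace X) b d + (d == 0%N))%N)
    + rho ^ (z - chain_deg (necklace X) b d.+2)
    + 2 * rho ^ (z - chain_deg (necklace X) b d.+1)) (words p) <= _).
  apply: sumR_le => X _; have ws := wf_necklace X.
  rewrite !necklace_rcons !(chain_deg_step _ _ _ ws).
  by case: b => /=; rewrite ?addn0; lra.
rewrite !sumR_add sumR_scal.
have h1 : sumR (fun X => rho ^ (z - (chain_deg (necklace X) b d + (d == 0%N))%N))
    (words p) <= past_bound (z - 1) * 4 ^ p.
  case: d => [|d] /=.
    by apply: Rle_trans (IH0 (z - 1)%N); apply: sumR_le => X _; rewrite sub_addn1; lra.
  by apply: Rle_trans (IHS d z); apply: sumR_le => X _; rewrite addn0; lra.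
have := IHS d.+1 z; have := IHS d z.
rewrite /past_sum [4 ^ p.+1]/=; nra.
Qed.

End PastStep.

Lemma past_sum_bound p b :
  (forall z, past_sum p b 0 z <= past_bound z * 4 ^ p) /\
  (forall d z, past_sum p b d.+1 z <= past_bound (z - 1) * 4 ^ p).
Proof.
elim: p => [|p [IH0 IHS]].
  split=> [z|d z]; rewrite /past_sum /= /necklace /= chain_deg_init Rmult_1_r Rplus_0_r.
    exact: past_bound_init.
  exact: past_bound_ge.
by split; [apply: past_step0 | apply: past_stepS].
Qed.

Close Scope R_scope.

Lemma face_vertex0 (a b c : vtx) (H : (0 < 3)%N) : face_vertex (a, b, c) (Ordinal H) = a.
Proof. by []. Qed.
Lemma face_vertex1 (a b c : vtx) (H : (1 < 3)%N) : face_vertex (a, b, c) (Ordinal H) = b.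
Proof. by []. Qed.
Lemma face_vertex2 (a b c : vtx) (H : (2 < 3)%N) : face_vertex (a, b, c) (Ordinal H) = c.
Proof. by []. Qed.

(* Where the vertices of the face created by letter c end up: at a given
   depth of a chain of the new state, or off the boundary ([None]: the end
   popped by [Lb] or [Lr]). *)
Definition face_slot (c : letter) (i : nat) : option (bool * nat) :=
  match c, i with
  | LB, 0 => Some (true, 1) | LB, 1 => Some (false, 0) | LB, _ => Some (true, 0)
  | Lb, 0 => Some (true, 0) | Lb, 1 => None | Lb, _ => Some (false, 0)
  | LR, 0 => Some (true, 0) | LR, 1 => Some (false, 1) | LR, _ => Some (false, 0)
  | Lr, 0 => Some (true, 0) | Lr, 1 => None | Lr, _ => Some (false, 0)
  end.

Lemma face_slot_vertex t c s (i : 'I_3) b d : face_slot c i = Some (b, d) ->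
  face_vertex (step_face t c s) i = nth (VInt 0) (chain b (step t c s)) d /\
  (d < size (chain b (step t c s)))%N.
Proof.
rewrite step_face_ends; case: c; case: i => [[|[|[|?]]] Hi] // [<- <-];
  rewrite ?face_vertex0 ?face_vertex1 ?face_vertex2 /chain;
  first [ split; [exact: blue_end_nth | exact: (size_chain true)]
        | split; [exact: red_end_nth | exact: (size_chain false)]
        | by rewrite ?blue_chain_step ?red_chain_step /= -?blue_end_nth
            -?red_end_nth ?size_rcons ].
Qed.

Lemma face_slot_dead t c s (i : 'I_3) : face_slot c i = None ->
  exists b, [/\ c = pop b, val i = 1%N
    & face_vertex (step_face t c s) i = nth (VInt 0) (chain b s) 0].
Proof.
rewrite step_face_ends; case: c; case: i => [[|[|[|?]]] Hi] // _.
  by exists true; rewrite face_vertex1 -blue_end_nth.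
by exists false; rewrite face_vertex1 -red_end_nth.
Qed.

Lemma face_vertex_present t c s (i : 'I_3) : wf t s ->
  present t.+1 (step t c s) (face_vertex (step_face t c s) i).
Proof.
move=> ws; case E: (face_slot c i) => [[b d]|].
  have [-> dS] := face_slot_vertex t s E.
  exact: present_nth (wf_step c ws) dS.
have [b [_ _ ->]] := face_slot_dead t s E.
by apply: present_step; apply: present_nth ws (size_chain b s).
Qed.

Open Scope R_scope.

(* The bound, in terms of the state before the step, attached to each
   vertex of the new face: the end of chain b, the next vertex of chain b,
   or the vertex created by the step. *)
Inductive source := EndOf of bool | NextOf of bool | Fresh.

Definition face_source (c : letter) (i : nat) : source :=
  match c, i with
  | LB, 0 => EndOf true | LB, 1 => EndOf false | LB, _ => Fresh
  | Lb, 0 => NextOf true | Lb, 1 => EndOf true | Lb, _ => EndOf false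
  | LR, 0 => EndOf true | LR, 1 => EndOf false | LR, _ => Fresh
  | Lr, 0 => EndOf true | Lr, 1 => EndOf false | Lr, _ => NextOf false
  end.

Definition face_weight (s : state) (m : nat) (src : source) : R :=
  match src with
  | EndOf b => rho ^ (m - 3 - chain_deg s b 0)
  | NextOf b => rho ^ (m - 2 - chain_deg s b 1)
  | Fresh => rho ^ (m - 3)
  end.

Lemma face_vertex_tail t c s (i : 'I_3) m : wf t s ->
  let v := face_vertex (step_face t c s) i in
  tail_bound (pos (step t c s) v) (m - deg_in (edges (step t c s)) v)
  <= face_weight s m (face_source c i).
Proof.
move=> ws; case E: (face_slot c i) => [[b d]|] /=.
  have [-> dS] := face_slot_vertex t s E.
  have ->: deg_in (edges (step t c s)) (nth (VInt 0) (chain b (step t c s)) d) =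
      chain_deg (step t c s) b d by rewrite /chain_deg dS.
  rewrite (pos_nth (wf_step c ws) dS) (chain_deg_step _ _ _ ws).
  by move: E {dS}; case: c; case: i => [[|[|[|?]]] Hi] // [<- <-] /=;
    apply: rho_pow_anti; lia.
have [b [-> i1 ->]] := face_slot_dead t s E; have dS := size_chain b s.
rewrite (pos_step _ ws (present_nth ws dS)) (pos_nth ws dS) (chain_deg_gain ws dS).
have -> : face_source (pop b) i = EndOf b by rewrite i1; case: b {dS}.
have g1 : (gain_of (pop b) (if b then Blue 0 else Red 0) s <= 1)%N.
  by rewrite /gain_of /gain /gain_at; case: b {dS}; case: (nilp _).
move: (gain_of _ _ s) g1 => g g1.
have -> : pos_next (pop b) (if b then Blue 0 else Red 0) = Off by case: b {dS}.
rewrite /=; case: eqP => h; last exact: rho_pow_ge0.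
by case: b {dS} h => h; rewrite (_ : (m - 3 - _)%N = 0%N) /=; lra || lia.
Qed.

Lemma face_weight_sum src a m :
  sumR (fun X => face_weight (necklace X) m src) (words a) <= past_bound (m - 3) * 4 ^ a.
Proof.
case: src => [b|b|] /=.
- by case: (past_sum_bound a b) => P0 _; apply: P0.
- by case: (past_sum_bound a b) => _ PS; have := PS 0%N (m - 2)%N; rewrite /past_sum -subnDA.
- rewrite sumR_const size_words INR_expn4.
  have := past_bound_ge (m - 3); have : 0 <= 4 ^ a by apply: pow_le; lra.
  nra.
Qed.

Close Scope R_scope.

Lemma size_faces_necklace X : size (faces (necklace X)) = size X.
Proof.
elim/last_ind: X => [|X x IH] //.
by rewrite necklace_rcons faces_step !size_rcons IH.
Qed.

Lemma nth_faces_run t Y s k d : (k < size (faces s))%N ->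
  nth d (faces (run_from t Y s)) k = nth d (faces s) k.
Proof.
elim: Y t s => [|x Y IH] t s //= ks.
by rewrite IH ?faces_step ?size_rcons 1?ltnW // nth_rcons ks.
Qed.

Definition deg_event (j : nat) (i : 'I_3) (m : nat) (W : seq letter) : bool :=
  (m <= deg_in (edges (necklace W))
    (face_vertex (nth (VInt 0, VInt 0, VInt 0) (faces (necklace W)) j.-1) i))%N.

Lemma deg_event_split i m X c Y :
  let t := (size X).+1 in let s := step t c (necklace X) in
  let v := face_vertex (step_face t c (necklace X)) i in
  deg_event t i m (X ++ c :: Y) = (m - deg_in (edges s) v <= future_deg t.+1 Y s v)%N.
Proof.
move=> t s v.
have hN : necklace (X ++ c :: Y) = run_from t.+1 Y s.
  by rewrite /necklace run_cat /= add1n.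
rewrite /deg_event hN deg_run leq_subLR.
rewrite nth_faces_run; last by rewrite /s faces_step size_rcons size_faces_necklace.
by rewrite /s faces_step nth_rcons size_faces_necklace ltnn eqxx.
Qed.

Open Scope R_scope.

(* Sum over the
   prefix X, the letter c and the suffix Y: the future bound handles Y,
   [face_vertex_tail] the letter c, and [face_weight_sum] the prefix X. *)
Lemma deg_event_count a b (i : 'I_3) m :
  sumR (fun W => if deg_event a.+1 i m W then 1 else 0) (words (a + b.+1))
  <= past_bound (m - 3) * 4 ^ (a + b.+1).
Proof.
rewrite sumR_words_add.
have pow4_ge0 k : 0 <= 4 ^ k by apply: pow_le; lra.
pose w X c := face_weight (necklace X) m (face_source c i).
have per_letter (X : seq letter) c : X \in words a ->
    sumR (fun Y => if deg_event a.+1 i m (X ++ c :: Y) then 1 else 0) (words b)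
    <= 4 ^ b * w X c.
  rewrite mem_words Rmult_comm => /eqP sX; have ws := wf_necklace X.
  apply: Rle_trans (Rmult_le_compat_r _ _ _ (pow4_ge0 b) (face_vertex_tail c i m ws)).
  apply: Rle_trans (future_tail b _ (wf_step c ws) (face_vertex_present c i ws)).
  by apply: sumR_le => Y _; rewrite -sX deg_event_split; lra.
apply: Rle_trans (_ : sumR (fun X => 4 ^ b * w X LB + 4 ^ b * w X Lb
    + 4 ^ b * w X LR + 4 ^ b * w X Lr) (words a) <= _).
  apply: sumR_le => X Xa; rewrite sumR_words.
  by have := per_letter X LB Xa; have := per_letter X Lb Xa;
    have := per_letter X LR Xa; have := per_letter X Lr Xa; lra.
rewrite !sumR_add !sumR_scal pow_add [4 ^ b.+1]/= /w.
have := face_weight_sum (face_source LB i) a m; have := face_weight_sum (face_source Lb i) a m.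
have := face_weight_sum (face_source LR i) a m; have := face_weight_sum (face_source Lr i) a m.
have := pow4_ge0 a; have := pow4_ge0 b; nra.
Qed.

(* Since (3/4)^(1/4) >= 0.93, it suffices to compare with
   2 * 0.93^m: for m <= 9 the trivial bound 1 suffices, beyond we use the
   decay of [past_bound]. *)
Lemma past_bound_tail k : past_bound (k + 7) <= 2 * (93 / 100) ^ (k + 10).
Proof.
elim: k => [|k IH]; first by rewrite /past_bound /rho /=; lra.
have e1 : (k.+1 + 7 = (k + 7).+1)%N by lia.
have e2 : (k.+1 + 10 = (k + 10).+1)%N by lia.
move: IH; rewrite /past_bound e1 e2 S_INR [rho ^ (k + 7).+1]/=.
rewrite [(93 / 100) ^ (k + 10).+1]/= plus_INR.
have := pos_INR k; have := rho_pow_ge0 (k + 7); rewrite /rho; simpl INR.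
nra.
Qed.

Lemma root4_three_quarters_pow m :
  Rpower (3 / 4) (INR m / INR 4) = Rpower (3 / 4) (1 / 4) ^ m.
Proof.
rewrite -Rpower_pow; last by rewrite /Rpower; apply: exp_pos.
by rewrite Rpower_mult; congr Rpower; rewrite /=; field.
Qed.

Lemma root4_three_quarters_ge : 93 / 100 <= Rpower (3 / 4) (1 / 4).
Proof.
set q := Rpower (3 / 4) (1 / 4).
have q4 : q ^ 4 = 3 / 4.
  rewrite -Rpower_pow; last by rewrite /q /Rpower; apply: exp_pos.
  rewrite /q Rpower_mult (_ : 1 / 4 * INR 4 = 1); last by rewrite /=; field.
  by rewrite Rpower_1 //; lra.
apply: Rnot_lt_le => hq.
have : q ^ 4 <= (93 / 100) ^ 4.
  apply: pow_incr; split; last lra.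
  by rewrite /q /Rpower; apply: Rlt_le; apply: exp_pos.
rewrite q4 /=; lra.
Qed.

Lemma prob_bound_numeric (m : nat) (x : R) : (1 <= m)%N -> x <= 1 ->
  x <= past_bound (m - 3) -> x <= INR 2 * Rpower (INR 3 / INR 4) (INR m / INR 4).
Proof.
move=> hm x1 xF.
have -> : INR 3 / INR 4 = 3 / 4 by rewrite /=; field.
rewrite root4_three_quarters_pow (_ : INR 2 = 2); last by rewrite /=; lra.
have hq : (93 / 100) ^ m <= Rpower (3 / 4) (1 / 4) ^ m.
  by apply: pow_incr; split; [lra | apply: root4_three_quarters_ge].
case: (leqP m 9) => hm9.
  have : (93 / 100) ^ 9 <= (93 / 100) ^ m by apply: pow_anti => //; lra.
  rewrite /=; lra.
have := past_bound_tail (m - 10).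
rewrite (_ : (m - 10 + 7 = m - 3)%N); last by lia.
rewrite (_ : (m - 10 + 10 = m)%N); last by lia.
lra.
Qed.

Close Scope R_scope.

Lemma card_letter : #|{: letter}| = 4%N.
Proof.
have : bijective letter_code.
  by exists letter_decode; [exact: letter_codeK | case=> [[] []]].
by move/bij_eq_card ->; rewrite card_prod card_bool.
Qed.

Lemma size_word_of n (w : {ffun 'I_n -> letter}) : size (word_of w) = n.
Proof. by rewrite size_map size_enum_ord. Qed.

Lemma nth_word_of n (w : {ffun 'I_n -> letter}) (i : 'I_n) : nth LB (word_of w) i = w i.
Proof. by rewrite (nth_map i) ?size_enum_ord // nth_ord_enum. Qed.

Lemma word_of_inj n : injective (@word_of n).
Proof. by move=> w1 w2 e; apply/ffunP => i; rewrite -!nth_word_of e. Qed.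

Lemma card_set_count (T : finType) (P : pred T) : #|[set x | P x]| = count P (enum T).
Proof.
rewrite cardsE cardE /enum_mem size_filter count_filter.
by apply: eq_count => x; rewrite !inE andbT.
Qed.

Lemma count_words n (P : pred (seq letter)) :
  #|[set w : {ffun 'I_n -> letter} | P (word_of w)]| = count P (words n).
Proof.
rewrite card_set_count -(count_map (@word_of n) P); apply/permP/uniq_perm.
- by rewrite map_inj_uniq ?enum_uniq //; apply: word_of_inj.
- exact: words_uniq.
move=> W; rewrite mem_words; apply/mapP/eqP => [[w _ ->]|sW].
  exact: size_word_of.
exists [ffun i : 'I_n => nth LB W i]; first by rewrite mem_enum.
apply: (@eq_from_nth _ LB); first by rewrite size_word_of.
move=> k; rewrite sW => kn.
by have := nth_word_of [ffun i : 'I_n => nth LB W i] (Ordinal kn); rewrite ffunE.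
Qed.

Lemma card_event n j (i : 'I_3) m :
  #|[set p : {ffun 'I_n -> letter} * 'I_n |
      let T := rooted_necklace (word_of p.1) (val p.2).+1 in
      (m <= deg T (face_vertex (face T j) i))%N]|
  = (count (deg_event j i m) (words n) * n)%N.
Proof.
transitivity #|setX [set w : {ffun 'I_n -> letter} | deg_event j i m (word_of w)]
                    [set: 'I_n]|.
  by apply: eq_card => -[w k]; rewrite !inE andbT.
by rewrite cardsX cardsT card_ord count_words.
Qed.

Lemma card_sample n : #|{: {ffun 'I_n -> letter} * 'I_n}| = (4 ^ n * n)%N.
Proof. by rewrite card_prod card_ffun card_letter card_ord. Qed.

Open Scope R_scope.

Theorem lemma3 (n : nat) (hn : (1 <= n)%N) (j : nat) (hj : (1 <= j <= n)%N)
    (i : 'I_3) (m : nat) (hm : (1 <= m)%N) :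
  Rle (prob_deg_ge n j i m)
      (Rmult (INR 2) (Rpower (Rdiv (INR 3) (INR 4)) (Rdiv (INR m) (INR 4)))).
Proof.
rewrite /prob_deg_ge card_event card_sample !mult_INR INR_expn4.
set c := count (deg_event j i m) (words n).
have n0 : INR n <> 0 by apply: not_0_INR; lia.
have p0 : 0 < 4 ^ n by apply: pow_lt; lra.
rewrite (_ : INR c * INR n / (4 ^ n * INR n) = INR c / 4 ^ n); last by field; lra.
apply: prob_bound_numeric => //; apply/(Rmult_le_reg_r (4 ^ n)) => //;
  rewrite /Rdiv Rmult_assoc Rinv_l ?Rmult_1_r ?Rmult_1_l; try lra.
- rewrite -INR_expn4 -(size_words n); apply/le_INR/ssrnat.leP; exact: count_size.
- have := deg_event_count (j - 1) (n - j) i m.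
  rewrite (_ : (j - 1).+1 = j); last by lia.
  by rewrite (_ : (j - 1 + (n - j).+1)%N = n) -?count_sumR //; lia.
Qed.
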